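(* Let $H$ be a complex Hilbert space and let $A$ and $B$ be densely defined symmetric operators in $H$ with $D(A)=D(B)$. If $A+iB\subset 0$ (i.e. $Ax+iBx=0$ for all $x\in D(A)=D(B)$), then $A\subset 0$ and $B\subset 0$ (i.e. $A$ and $B$ vanish on their domain). If moreover $A$ (or $B$) is closed, then $A=B=0$ everywhere on $H$.
   Context: A densely defined operator $S$ is symmetric if $S\subset S^*$. For operators $S,T$, $S\subset T$ means $D(S)\subset D(T)$ and $S=T$ on $D(S)$; $0$ denotes the zero operator defined on all of $H$. The sum $A+iB$ is defined on $D(A)\cap D(B)$. *)

From mathcomp Require Import all_boot all_algebra.
From mathcomp Require Import boolp classical_sets reals.
From mathcomp.real_closed Require Import complex.
Set Implicit Arguments. Unset Strict Implicit. Unset Printing Implicit Defensive.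
Import GRing.Theory Num.Theory.
Local Open Scope ring_scope.
Local Open Scope classical_set_scope.

Section Hilbert.
Variables (R : realType) (H : lmodType R[i]).

Definition ip_norm (ip : H -> H -> R[i]) (x : H) : R := Num.sqrt (complex.Re (ip x x)).

Definition ip_cvg (ip : H -> H -> R[i]) (u : nat -> H) (x : H) : Prop :=
  forall e : R, 0 < e -> exists N : nat, forall n : nat, (N <= n)%N ->
    ip_norm ip (u n - x) < e.

Definition ip_cauchy (ip : H -> H -> R[i]) (u : nat -> H) : Prop :=
  forall e : R, 0 < e -> exists N : nat, forall m n : nat, (N <= m)%N -> (N <= n)%N ->
    ip_norm ip (u m - u n) < e.

Record hilbert_space := HilbertSpace {
  ip : H -> H -> R[i];
  ip_linl : forall (a : R[i]) (x y z : H), ip (a *: x + y) z = a * ip x z + ip y z;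
  ip_conj : forall x y : H, ip y x = ((ip x y)^*)%C;
  ip_ge0 : forall x : H, 0 <= ip x x;
  ip_eq0 : forall x : H, ip x x = 0 -> x = 0;
  ip_complete : forall u : nat -> H, ip_cauchy ip u -> exists x : H, ip_cvg ip u x
}.

(* A (possibly unbounded) operator in H: a domain and an action on it
   (values outside the domain are irrelevant). *)
Record op := Op { dom : set H; app : H -> H }.

Definition linear_op (S : op) : Prop :=
  dom S 0 /\
  (forall (a : R[i]) (x y : H), dom S x -> dom S y -> dom S (a *: x + y)) /\
  (forall (a : R[i]) (x y : H), dom S x -> dom S y ->
      app S (a *: x + y) = a *: app S x + app S y).

Definition densely_defined (Hs : hilbert_space) (S : op) : Prop :=
  forall x : H, exists u : nat -> H, (forall n, dom S (u n)) /\ ip_cvg (ip Hs) u x.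

Definition adjoint (Hs : hilbert_space) (S : op) : op :=
  Op [set y | exists z : H, forall x, dom S x -> ip Hs (app S x) y = ip Hs x z]
     (fun y => xget 0 [set z | forall x, dom S x -> ip Hs (app S x) y = ip Hs x z]).

Definition op_sub (S T : op) : Prop :=
  dom S `<=` dom T /\ (forall x, dom S x -> app S x = app T x).

Definition op_eq (S T : op) : Prop := op_sub S T /\ op_sub T S.

(* symmetric: S ⊂ S^* (density is required separately) *)
Definition symmetric_op (Hs : hilbert_space) (S : op) : Prop :=
  op_sub S (adjoint Hs S).

Definition zero_op : op := Op setT (fun _ => 0).

Definition op_add (S T : op) : op := Op (dom S `&` dom T) (fun x => app S x + app T x).
Definition op_scale (c : R[i]) (S : op) : op := Op (dom S) (fun x => c *: app S x).

Definition closed_op (Hs : hilbert_space) (S : op) : Prop :=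
  forall (u : nat -> H) (x y : H), (forall n, dom S (u n)) ->
    ip_cvg (ip Hs) u x -> ip_cvg (ip Hs) (fun n => app S (u n)) y ->
    dom S x /\ app S x = y.

End Hilbert.

(* Writing the hypothesis as B x = i A x, symmetry of A and B gives
   <A x, y> = -i <B x, y> = -i <x, B y> = -i <x, i A y> = - <A x, y>
   for x, y in the common domain, so A x is orthogonal to the dense domain and
   hence vanishes; then B x = i A x vanishes too.  A closed operator that
   vanishes on a dense domain is defined everywhere: if u n -> x with u n in
   the domain, then the images are constantly 0, so x lies in the domain. *)
From mathcomp Require Import all_boot all_order all_algebra.
From mathcomp Require Import boolp classical_sets reals.
From mathcomp.real_closed Require Import complex.
Set Implicit Arguments. Unset Strict Implicit. Unset Printing Implicit Defensive.
Import Order.TTheory GRing.Theory Num.Theory.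
Local Open Scope ring_scope.

Section InnerProduct.
Variables (R : realType) (H : lmodType R[i]) (Hs : hilbert_space H).
Local Notation ipp := (ip Hs).

Lemma ip0l z : ipp 0 z = 0.
Proof.
apply: (addrI (ipp 0 z)).
by rewrite addr0 -{1}[ipp 0 z]mul1r -ip_linl scaler0 addr0.
Qed.

Lemma ipZl a x z : ipp (a *: x) z = a * ipp x z.
Proof. by have := ip_linl Hs a x 0 z; rewrite addr0 ip0l addr0. Qed.

Lemma ipDl x y z : ipp (x + y) z = ipp x z + ipp y z.
Proof. by have := ip_linl Hs 1 x y z; rewrite scale1r mul1r. Qed.

Lemma ipBl x y z : ipp (x - y) z = ipp x z - ipp y z.
Proof. by rewrite ipDl -scaleN1r ipZl mulN1r. Qed.

Lemma ipZr a x z : ipp z (a *: x) = (a^*)%C * ipp z x.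
Proof. by rewrite ip_conj ipZl rmorphM /= -ip_conj. Qed.

Lemma ipBr x y z : ipp z (x - y) = ipp z x - ipp z y.
Proof. by rewrite ip_conj ipBl rmorphB /= -!ip_conj. Qed.

Lemma ip_selfE x : ipp x x = (complex.Re (ipp x x))%:C%C.
Proof.
by move: (ip_ge0 Hs x); rewrite lecE; case: (ipp x x) => a b /= /andP[/eqP -> _].
Qed.

Lemma ip_cvg_cst x : ip_cvg ipp (fun=> x) x.
Proof.
by move=> e e0; exists 0%N => n _; rewrite /ip_norm subrr ip0l /= sqrtr0.
Qed.

Lemma orthogonal_dense_eq0 (S : op H) v : densely_defined Hs S ->
  (forall y, dom S y -> ipp v y = 0) -> v = 0.
Proof.
move=> /(_ v) [u [Su uv]] v_orth; apply: (@ip_eq0 _ _ Hs).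
suff vv0 : complex.Re (ipp v v) = 0 by rewrite ip_selfE vv0.
apply/eqP; rewrite eq_le.
have -> /= : 0 <= complex.Re (ipp v v) by rewrite -lecR -ip_selfE ip_ge0.
rewrite andbT leNgt; apply/negP => vv_gt0.
have sqrt_gt0 : 0 < Num.sqrt (complex.Re (ipp v v)) by rewrite sqrtr_gt0.
have [N /(_ N (leqnn N))] := uv _ sqrt_gt0.
rewrite /ip_norm ltr_sqrt //.
(* orthogonality gives |u N - v|^2 = |u N|^2 + |v|^2 >= |v|^2 *)
have uNv0 : ipp (u N) v = 0 by rewrite ip_conj v_orth // conjc0.
rewrite ipBl !ipBr v_orth // uNv0 subr0 sub0r opprK raddfD /= gtrDr.
by rewrite ltNge -lecR -ip_selfE ip_ge0.
Qed.

Lemma symmetric_op_ip (S : op H) x y : symmetric_op Hs S ->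
  dom S x -> dom S y -> ipp (app S x) y = ipp x (app S y).
Proof.
move=> [SS' S'E] Sx Sy; rewrite [app S y]S'E //=.
exact: (xgetPex 0 (SS' y Sy)).
Qed.

End InnerProduct.

Section Operators.
Variables (R : realType) (H : lmodType R[i]) (Hs : hilbert_space H).

Lemma op_sub0P (S : op H) :
  op_sub S (zero_op H) <-> forall x, dom S x -> app S x = 0.
Proof. by split=> [[_ S0] x /S0 -> | S0]. Qed.

Lemma op_eq0_of_sub0 (S : op H) :
  op_sub S (zero_op H) -> dom S = setT -> op_eq S (zero_op H).
Proof. by move=> [_ S0] ST; split; split=> // [x _ | x _ /=]; rewrite ?ST ?S0 ?ST. Qed.

Lemma closed_dense_sub0_domT (S : op H) : closed_op Hs S -> densely_defined Hs S ->
  op_sub S (zero_op H) -> dom S = setT.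
Proof.
move=> Sclosed Sdense /op_sub0P S0; apply/seteqP; split=> // x _.
have [u [Su ux]] := Sdense x.
have Su0 : (fun n => app S (u n)) = fun=> 0 by apply/funext => n; rewrite S0.
by have [] // := Sclosed u x 0 Su ux; rewrite Su0; apply: ip_cvg_cst.
Qed.

Section SymmetricPair.
Variables (A B : op H).
Hypotheses (dAB : dom A = dom B)
  (AiB0 : op_sub (op_add A (op_scale 'i%C B)) (zero_op H)).

Lemma app_addi_sub0 x : dom A x -> app B x = 'i%C *: app A x.
Proof.
move=> Ax; have Bx : dom B x by rewrite -dAB.
have /eqP := proj2 AiB0 x (conj Ax Bx); rewrite addr_eq0 => /eqP ->.
by rewrite scalerN scalerA -expr2 sqr_i scaleN1r opprK.
Qed.

Lemma ip_app_addi_sub0 x y : symmetric_op Hs A -> symmetric_op Hs B ->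
  dom A x -> dom A y -> ip Hs (app A x) y = 0.
Proof.
move=> Asym Bsym Ax Ay; have Bx : dom B x by rewrite -dAB.
have By : dom B y by rewrite -dAB.
have conj_i : ('i^*)%C = - 'i%C :> R[i] by apply/eqP; rewrite eq_complex /= oppr0 !eqxx.
have /eqP : 'i%C * ip Hs (app A x) y = - 'i%C * ip Hs (app A x) y.
  rewrite -ipZl -app_addi_sub0 // symmetric_op_ip // app_addi_sub0 // ipZr.
  by rewrite -symmetric_op_ip // conj_i.
rewrite mulNr -subr_eq0 opprK -mulr2n mulrn_eq0 /= mulf_eq0 => /orP[|/eqP //].
by rewrite eq_complex /= oner_eq0 andbF.
Qed.

End SymmetricPair.
End Operators.

Theorem proposition2p6 (R : realType) (H : lmodType R[i]) (Hs : hilbert_space H)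
    (A B : op H) :
  linear_op A -> linear_op B ->
  densely_defined Hs A -> densely_defined Hs B ->
  symmetric_op Hs A -> symmetric_op Hs B ->
  dom A = dom B ->
  op_sub (op_add A (op_scale 'i%C B)) (zero_op H) ->
  (op_sub A (zero_op H) /\ op_sub B (zero_op H)) /\
  (closed_op Hs A \/ closed_op Hs B -> op_eq A (zero_op H) /\ op_eq B (zero_op H)).
Proof.
move=> _ _ Adense Bdense Asym Bsym dAB AiB0.
have A0 x : dom A x -> app A x = 0.
  move=> Ax; apply: (orthogonal_dense_eq0 Adense) => y Ay.
  exact: (ip_app_addi_sub0 dAB AiB0).
have B0 x : dom B x -> app B x = 0.
  by rewrite -dAB => Ax; rewrite (app_addi_sub0 dAB AiB0) // A0 // scaler0.
have Asub0 : op_sub A (zero_op H) by apply/op_sub0P.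
have Bsub0 : op_sub B (zero_op H) by apply/op_sub0P.
split=> // -[Aclosed | Bclosed].
- have AT := closed_dense_sub0_domT Aclosed Adense Asub0.
  by split; apply: op_eq0_of_sub0; rewrite // -dAB.
- have BT := closed_dense_sub0_domT Bclosed Bdense Bsub0.
  by split; apply: op_eq0_of_sub0; rewrite // dAB.
Qed.
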